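(* Let $(B,\sqsubseteq)$ be an ordered functor with a cofree comonad, let $\Sigma$ be a functor with a free monad, and suppose $\sqsubseteq_{B\Sigma^*\emptyset}$ makes $B\Sigma^*\emptyset$ a pointed DCPO (a partial order with a least element in which every directed subset has a supremum). Then every monotone biGSOS specification $\rho\colon\Sigma B^\infty\Rightarrow B\Sigma^*$ has a least supported model, i.e. there is a supported model $f$ such that $f(t)\sqsubseteq_{B\Sigma^*\emptyset} g(t)$ for every supported model $g$ and every $t\in\Sigma^*\emptyset$.
   Context: An ordered functor $(B,\sqsubseteq)$ is a functor $B\colon\mathsf{Set}\to\mathsf{Set}$ together with a preorder $\sqsubseteq_{BX}$ on $BX$ for every set $X$, such that $Bf$ is monotone for every function $f$. Relation lifting: for $R\subseteq X\times Y$ with projections $\pi_1,\pi_2$ and any functor $F$, $\mathsf{Rel}(F)(R)=\{(b,c)\in FX\times FY\mid\exists d\in FR.\ F\pi_1(d)=b,\ F\pi_2(d)=c\}$; $\mathsf{Rel}_{\sqsubseteq}(B)(R)=\{(b,c)\mid\exists b',c'.\ b\sqsubseteq b',\ (b',c')\in\mathsf{Rel}(B)(R),\ c'\sqsubseteq c\}$. For coalgebras $f\colon X\to BX$, $g\colon Y\to BY$, $R\subseteq X\times Y$ is a simulation if $(f(x),g(y))\in\mathsf{Rel}_{\sqsubseteq}(B)(R)$ for all $(x,y)\in R$; similarity is the greatest simulation. Cofree comonad: for each set $X$, $\theta_X\colon B^\infty X\to BB^\infty X$, $\epsilon_X\colon B^\infty X\to X$ with $\langle\theta_X,\epsilon_X\rangle$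 a final $B(-)\times X$-coalgebra; for $f\colon X\to BX$, $f^\infty\colon X\to B^\infty X$ is the unique coalgebra morphism from $\langle f,\mathrm{id}_X\rangle$ to $\langle\theta_X,\epsilon_X\rangle$. The functor $B(-)\times X$ is ordered by $(b,x)\,\widetilde\sqsubseteq\,(c,y)$ iff $b\sqsubseteq c$ and $x=y$; $\lesssim_{B^\infty X}$ is the similarity of $\langle\theta_X,\epsilon_X\rangle$ with itself w.r.t. this order. Free monad: for each set $X$, $\iota_X\colon\Sigma\Sigma^*X\to\Sigma^*X$, $\eta_X\colon X\to\Sigma^*X$ with $[\iota_X,\eta_X]$ an initial algebra for $\Sigma(-)+X$; $\mu_X\colon\Sigma^*\Sigma^*X\to\Sigma^*X$ is the unique map with $\mu_X\circ\eta_{\Sigma^*X}=\mathrm{id}$ and $\mu_X\circ\iota_{\Sigma^*X}=\iota_X\circ\Sigma\mu_X$. A biGSOS specification is a natural transformation $\rho\colon\Sigma B^\infty\Rightarrow B\Sigma^*$. It is monotone if for every set $X$ and all $u,v\in\Sigma B^\infty X$ with $(u,v)\in\mathsf{Rel}(\Sigma)(\lesssim_{B^\infty X})$ we have $\rho_X(u)\sqsubseteq_{B\Sigma^*X}\rho_X(v)$. A supported model of $\rho$ is a function $f\colon\Sigma^*\emptyset\to B\Sigma^*\emptyset$ such that $f\circ\iota_\emptyset=B\mu_\emptyset\circ\rho_{\Sigma^*\emptyset}\circ\Sigma f^\infty$. *)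

(* Sets are modelled by Types, functions by
   Rocq functions; equalities of functions are stated pointwise. *)
From Stdlib Require Import Relations.


Record Functor := {
  fobj :> Type -> Type;
  fmap : forall X Y : Type, (X -> Y) -> fobj X -> fobj Y;
  fmap_id : forall X (b : fobj X), fmap X X (fun x : X => x) b = b;
  fmap_comp : forall X Y Z (f : X -> Y) (g : Y -> Z) (b : fobj X),
      fmap X Z (fun x => g (f x)) b = fmap Y Z g (fmap X Y f b)
}.

Arguments fmap _ {X Y} _ _.

Record OrderedFunctor := {
  ofun :> Functor;
  ord : forall X : Type, ofun X -> ofun X -> Prop;
  ord_preorder : forall X, preorder (ofun X) (@ord X);
  fmap_mono : forall X Y (f : X -> Y) (b c : ofun X),
      ord X b c -> ord Y (fmap ofun f b) (fmap ofun f c)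
}.

Arguments ord _ {X} _ _.

Definition RelLift (F : Type -> Type)
  (Fmap : forall X Y : Type, (X -> Y) -> F X -> F Y)
  (X Y : Type) (R : X -> Y -> Prop) (b : F X) (c : F Y) : Prop :=
  exists d : F {p : X * Y | R (fst p) (snd p)},
    Fmap _ _ (fun p => fst (proj1_sig p)) d = b /\
    Fmap _ _ (fun p => snd (proj1_sig p)) d = c.

Definition RelLiftOrd (F : Type -> Type)
  (Fmap : forall X Y : Type, (X -> Y) -> F X -> F Y)
  (Ford : forall X : Type, F X -> F X -> Prop)
  (X Y : Type) (R : X -> Y -> Prop) (b : F X) (c : F Y) : Prop :=
  exists (b' : F X) (c' : F Y),
    Ford X b b' /\ RelLift F Fmap X Y R b' c' /\ Ford Y c' c.

Definition is_simulation (F : Type -> Type)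
  (Fmap : forall X Y : Type, (X -> Y) -> F X -> F Y)
  (Ford : forall X : Type, F X -> F X -> Prop)
  (X Y : Type) (f : X -> F X) (g : Y -> F Y) (R : X -> Y -> Prop) : Prop :=
  forall x y, R x y -> RelLiftOrd F Fmap Ford X Y R (f x) (g y).

Definition similarity (F : Type -> Type)
  (Fmap : forall X Y : Type, (X -> Y) -> F X -> F Y)
  (Ford : forall X : Type, F X -> F X -> Prop)
  (X Y : Type) (f : X -> F X) (g : Y -> F Y) (x : X) (y : Y) : Prop :=
  exists R : X -> Y -> Prop, is_simulation F Fmap Ford X Y f g R /\ R x y.

(** * Cofree comonad: for each X a final B(-) x X coalgebra <theta_X, eps_X> *)
Record CofreeComonad (B : Functor) := {
  Binf : Type -> Type;
  theta : forall X, Binf X -> B (Binf X);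
  eps : forall X, Binf X -> X;
  unfold : forall (X C : Type), (C -> B C * X) -> C -> Binf X;
  unfold_theta : forall X C (c : C -> B C * X) (z : C),
      theta X (unfold X C c z) = fmap B (unfold X C c) (fst (c z));
  unfold_eps : forall X C (c : C -> B C * X) (z : C),
      eps X (unfold X C c z) = snd (c z);
  unfold_unique : forall X C (c : C -> B C * X) (h : C -> Binf X),
      (forall z, theta X (h z) = fmap B h (fst (c z))) ->
      (forall z, eps X (h z) = snd (c z)) ->
      forall z, h z = unfold X C c z
}.

Arguments Binf {B} _ _.
Arguments theta {B} _ {X} _.
Arguments eps {B} _ {X} _.
Arguments unfold {B} _ {X C} _ _.

Definition Binf_map (B : Functor) (cf : CofreeComonad B) (X Y : Type)
  (h : X -> Y) : Binf cf X -> Binf cf Y :=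
  unfold cf (fun t : Binf cf X => (theta cf t, h (eps cf t))).
Arguments Binf_map {B} cf {X Y} h _.

Definition coinf (B : Functor) (cf : CofreeComonad B) (X : Type)
  (f : X -> B X) : X -> Binf cf X :=
  unfold cf (fun x : X => (f x, x)).
Arguments coinf {B} cf {X} f _.

Definition BX_obj (B : Functor) (X : Type) (Y : Type) : Type := (B Y * X)%type.
Definition BX_map (B : Functor) (X : Type) (Y Z : Type) (h : Y -> Z)
  (p : BX_obj B X Y) : BX_obj B X Z := (fmap B h (fst p), snd p).
Definition BX_ord (B : OrderedFunctor) (X : Type) (Y : Type)
  (p q : BX_obj B X Y) : Prop := ord B (fst p) (fst q) /\ snd p = snd q.

Definition sim_Binf (B : OrderedFunctor) (cf : CofreeComonad B) (X : Type)
  : Binf cf X -> Binf cf X -> Prop :=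
  similarity (BX_obj B X) (BX_map B X) (BX_ord B X) (Binf cf X) (Binf cf X)
    (fun t : Binf cf X => (theta cf t, eps cf t))
    (fun t : Binf cf X => (theta cf t, eps cf t)).

(** * Free monad: for each X an initial Sigma(-) + X algebra [iota_X, eta_X] *)
Record FreeMonad (S : Functor) := {
  Sstar : Type -> Type;
  iota : forall X, S (Sstar X) -> Sstar X;
  eta : forall X, X -> Sstar X;
  fold : forall (X A : Type), (S A -> A) -> (X -> A) -> Sstar X -> A;
  fold_iota : forall X A (a : S A -> A) (b : X -> A) (s : S (Sstar X)),
      fold X A a b (iota X s) = a (fmap S (fold X A a b) s);
  fold_eta : forall X A (a : S A -> A) (b : X -> A) (x : X),
      fold X A a b (eta X x) = b x;
  fold_unique : forall X A (a : S A -> A) (b : X -> A) (h : Sstar X -> A),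
      (forall s, h (iota X s) = a (fmap S h s)) ->
      (forall x, h (eta X x) = b x) ->
      forall t, h t = fold X A a b t
}.

Arguments Sstar {S} _ _.
Arguments iota {S} _ {X} _.
Arguments eta {S} _ {X} _.
Arguments fold {S} _ {X A} _ _ _.

Definition Sstar_map (S : Functor) (m : FreeMonad S) (X Y : Type)
  (h : X -> Y) : Sstar m X -> Sstar m Y :=
  fold m (fun u => iota m u) (fun x => eta m (h x)).
Arguments Sstar_map {S} m {X Y} h _.

Definition mu (S : Functor) (m : FreeMonad S) (X : Type)
  : Sstar m (Sstar m X) -> Sstar m X :=
  fold m (fun u => iota m u) (fun t => t).
Arguments mu {S} m {X} _.

Definition biGSOS (S : Functor) (B : Functor) (cf : CofreeComonad B)
  (m : FreeMonad S) : Type :=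
  forall X : Type, S (Binf cf X) -> B (Sstar m X).
Arguments biGSOS S {B} cf m.

Definition natural (S : Functor) (B : Functor) (cf : CofreeComonad B)
  (m : FreeMonad S) (rho : biGSOS S cf m) : Prop :=
  forall (X Y : Type) (h : X -> Y) (u : S (Binf cf X)),
    fmap B (Sstar_map m h) (rho X u) = rho Y (fmap S (Binf_map cf h) u).
Arguments natural {S B cf m} rho.

Definition monotone_spec (S : Functor) (B : OrderedFunctor)
  (cf : CofreeComonad B) (m : FreeMonad S) (rho : biGSOS S cf m) : Prop :=
  forall (X : Type) (u v : S (Binf cf X)),
    RelLift S (fun A C => @fmap S A C) (Binf cf X) (Binf cf X) (sim_Binf B cf X) u v ->
    ord B (rho X u) (rho X v).
Arguments monotone_spec {S B cf m} rho.

Definition supported_model (S : Functor) (B : Functor)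
  (cf : CofreeComonad B) (m : FreeMonad S) (rho : biGSOS S cf m)
  (f : Sstar m Empty_set -> B (Sstar m Empty_set)) : Prop :=
  forall s : S (Sstar m Empty_set),
    f (iota m s) =
    fmap B (mu m)
      (rho (Sstar m Empty_set) (fmap S (coinf cf f) s)).
Arguments supported_model {S B cf m} rho f.

Definition directed (P : Type) (le : P -> P -> Prop) (D : P -> Prop) : Prop :=
  (exists d, D d) /\
  forall x y, D x -> D y -> exists z, D z /\ le x z /\ le y z.
Arguments directed {P} le D.

Definition is_sup (P : Type) (le : P -> P -> Prop) (D : P -> Prop) (s : P)
  : Prop :=
  (forall d, D d -> le d s) /\ (forall u, (forall d, D d -> le d u) -> le s u).
Arguments is_sup {P} le D s.

Definition pointed_dcpo (P : Type) (le : P -> P -> Prop) : Prop :=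
  order P le /\
  (exists bot : P, forall x, le bot x) /\
  (forall D : P -> Prop, directed le D -> exists s, is_sup le D s).

(* Since the initial algebra [iota] of closed terms is invertible, supported
   models are exactly the fixpoints of
     Phi f = B mu . rho . Sigma f^infty . iota^-1
   on functions Sigma^* 0 -> B Sigma^* 0, ordered pointwise, which form a
   pointed DCPO.  Phi is monotone: if f <= g pointwise, the pairs
   (f^infty x, g^infty x) form a simulation, so Sigma f^infty and
   Sigma g^infty are related by the lifted similarity and monotonicity of rho
   applies.  Pataraia's theorem, which needs no continuity, then yields a
   least prefixpoint of Phi; it is a fixpoint, hence the least supported
   model. *)

From Stdlib Require Import Relations FunctionalExtensionality ClassicalEpsilon.

Section Pataraia.

Variables (P : Type) (le : P -> P -> Prop).
Hypothesis le_order : order P le.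
Hypothesis directed_sup : forall D, directed le D -> exists s, is_sup le D s.
Variable bot : P.
Hypothesis bot_least : forall x, le bot x.
Variable Phi : P -> P.
Hypothesis Phi_mono : forall x y, le x y -> le (Phi x) (Phi y).

Let le_refl := ord_refl _ _ le_order.
Let le_trans := ord_trans _ _ le_order.

Definition low_postfix (x : P) : Prop :=
  le x (Phi x) /\ forall y, le (Phi y) y -> le x y.

Lemma low_postfix_bot : low_postfix bot.
Proof. split; auto. Qed.

Lemma low_postfix_Phi x : low_postfix x -> low_postfix (Phi x).
Proof.
  intros [x_post x_low]. split; [now apply Phi_mono|].
  intros y y_pre. apply le_trans with (Phi y); auto.
Qed.

Lemma low_postfix_sup D s :
  (forall d, D d -> low_postfix d) -> is_sup le D s -> low_postfix s.
Proof.
  intros D_low [s_ub s_least]. split.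
  - apply s_least. intros d Dd.
    apply le_trans with (Phi d); [exact (proj1 (D_low d Dd))|]. auto.
  - intros y y_pre. apply s_least. intros d Dd. now apply (proj2 (D_low d Dd)).
Qed.

(* Pataraia's trick: the monotone inflationary self-maps of the low
   postfixpoints are closed under composition, so they form a directed family
   whose pointwise supremum is the greatest one. *)
Record expanding (k : P -> P) : Prop := {
  expanding_closed : forall x, low_postfix x -> low_postfix (k x);
  expanding_mono : forall x y,
      low_postfix x -> low_postfix y -> le x y -> le (k x) (k y);
  expanding_infl : forall x, low_postfix x -> le x (k x)
}.

Lemma expanding_id : expanding (fun x => x).
Proof. split; auto. Qed.

Lemma expanding_comp k1 k2 :
  expanding k1 -> expanding k2 -> expanding (fun x => k1 (k2 x)).
Proof.
  intros [c1 m1 i1] [c2 m2 i2]. split; auto.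
  intros x x_low. apply le_trans with (k2 x); auto.
Qed.

Lemma expanding_Phi k : expanding k -> expanding (fun x => Phi (k x)).
Proof.
  intros [c m i]. split.
  - intros x x_low. now apply low_postfix_Phi, c.
  - auto.
  - intros x x_low. apply le_trans with (k x); [auto | exact (proj1 (c x x_low))].
Qed.

Definition orbit (x z : P) : Prop := exists k, expanding k /\ z = k x.

Lemma orbit_low_postfix x z : low_postfix x -> orbit x z -> low_postfix z.
Proof. intros x_low [k [k_exp ->]]. now apply (expanding_closed _ k_exp). Qed.

Lemma orbit_directed x : low_postfix x -> directed le (orbit x).
Proof.
  intros x_low. split; [exists x, (fun x => x); split; auto using expanding_id|].
  intros a b [k1 [k1_exp ->]] [k2 [k2_exp ->]].
  exists (k1 (k2 x)). split; [|split].
  - exists (fun x => k1 (k2 x)). auto using expanding_comp.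
  - apply (expanding_mono _ k1_exp); auto.
    + now apply (expanding_closed _ k2_exp).
    + now apply (expanding_infl _ k2_exp).
  - apply (expanding_infl _ k1_exp). now apply (expanding_closed _ k2_exp).
Qed.

Definition orbit_sup (x : P) : P := epsilon (inhabits bot) (is_sup le (orbit x)).

Lemma orbit_supP x : low_postfix x -> is_sup le (orbit x) (orbit_sup x).
Proof. intros x_low. unfold orbit_sup. apply epsilon_spec, directed_sup, orbit_directed, x_low. Qed.

Lemma expanding_orbit_sup : expanding orbit_sup.
Proof.
  split.
  - intros x x_low. apply low_postfix_sup with (orbit x).
    + intros d. now apply orbit_low_postfix.
    + now apply orbit_supP.
  - intros x y x_low y_low xy. apply (orbit_supP x x_low).
    intros d [k [k_exp ->]]. apply le_trans with (k y); [now apply (expanding_mono _ k_exp)|].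
    apply (orbit_supP y y_low). now exists k.
  - intros x x_low. apply (orbit_supP x x_low).
    exists (fun x => x). auto using expanding_id.
Qed.

Lemma least_prefixpoint : exists x, Phi x = x /\ forall y, le (Phi y) y -> le x y.
Proof.
  set (t := orbit_sup bot).
  destruct (expanding_closed _ expanding_orbit_sup bot low_postfix_bot)
    as [t_post t_low].
  exists t. split; [|exact t_low].
  apply (ord_antisym _ _ le_order); [|exact t_post].
  apply (orbit_supP bot low_postfix_bot).
  exists (fun x => Phi (orbit_sup x)). auto using expanding_Phi, expanding_orbit_sup.
Qed.

End Pataraia.

Lemma dcpo_least_prefixpoint (P : Type) (le : P -> P -> Prop) :
  pointed_dcpo P le -> forall Phi : P -> P, (forall x y, le x y -> le (Phi x) (Phi y)) ->
  exists x, Phi x = x /\ forall y, le (Phi y) y -> le x y.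
Proof.
  intros [le_order [[bot bot_least] directed_sup]] Phi Phi_mono.
  exact (least_prefixpoint P le le_order directed_sup bot bot_least Phi Phi_mono).
Qed.

Lemma pointed_dcpo_fun (T P : Type) (le : P -> P -> Prop) :
  pointed_dcpo P le -> pointed_dcpo (T -> P) (fun f g => forall t, le (f t) (g t)).
Proof.
  intros [[le_refl le_trans le_antisym] [[bot bot_least] directed_sup]].
  split; [split|split].
  - intros f t. apply le_refl.
  - intros f g h fg gh t. eapply le_trans; eauto.
  - intros f g fg gf. apply functional_extensionality. intros t. auto.
  - exists (fun _ => bot). auto.
  - intros D [[f0 Df0] D_dir].
    assert (sup_at : forall t, exists s, is_sup le (fun z => exists h, D h /\ z = h t) s).
    { intros t. apply directed_sup. split; [exists (f0 t); eauto|].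
      intros a b [h1 [Dh1 ->]] [h2 [Dh2 ->]].
      destruct (D_dir h1 h2 Dh1 Dh2) as [h [Dh [h1h h2h]]].
      exists (h t). eauto. }
    destruct (choice _ sup_at) as [s s_sup].
    exists s. split.
    + intros h Dh t. apply (s_sup t). eauto.
    + intros u u_ub t. apply (s_sup t). intros z [h [Dh ->]]. auto.
Qed.

Section ClosedTerms.

Variables (S : Functor) (m : FreeMonad S).

Definition unroll : Sstar m Empty_set -> S (Sstar m Empty_set) :=
  fold m (fun u => fmap S (iota m) u) (fun e : Empty_set => match e with end).

Lemma iota_endo_id (h : Sstar m Empty_set -> Sstar m Empty_set) :
  (forall s, h (iota m s) = iota m (fmap S h s)) -> forall t, h t = t.
Proof.
  intros h_hom t.
  set (absurd := fun e : Empty_set => match e return Sstar m Empty_set with end).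
  rewrite (fold_unique _ m _ _ (fun u => iota m u) absurd h h_hom); [|intros []].
  symmetry. apply (fold_unique _ m _ _ (fun u => iota m u) absurd (fun t => t)).
  - intros s. now rewrite fmap_id.
  - intros [].
Qed.

Lemma iota_unroll t : iota m (unroll t) = t.
Proof.
  apply (iota_endo_id (fun t => iota m (unroll t))). intros s.
  unfold unroll at 1. rewrite fold_iota. now rewrite <- fmap_comp.
Qed.

Lemma unroll_iota s : unroll (iota m s) = s.
Proof.
  unfold unroll at 1. rewrite fold_iota, <- fmap_comp.
  rewrite <- (fmap_id S _ s) at 2. f_equal.
  apply functional_extensionality, iota_unroll.
Qed.

End ClosedTerms.

Arguments unroll {S} m _.

Lemma theta_coinf (B : Functor) (cf : CofreeComonad B) X (f : X -> B X) x :
  theta cf (coinf cf f x) = fmap B (coinf cf f) (f x).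
Proof. apply unfold_theta. Qed.

Lemma eps_coinf (B : Functor) (cf : CofreeComonad B) X (f : X -> B X) x :
  eps cf (coinf cf f x) = x.
Proof. apply unfold_eps. Qed.

Lemma RelLift_fmap (F : Functor) Z X Y (R : X -> Y -> Prop) (f : Z -> X) (g : Z -> Y) :
  (forall z, R (f z) (g z)) ->
  forall d : F Z, RelLift F (fun A C => @fmap F A C) X Y R (fmap F f d) (fmap F g d).
Proof.
  intros fg d.
  exists (fmap F (fun z => exist (fun p : X * Y => R (fst p) (snd p)) (f z, g z) (fg z)) d).
  split; now rewrite <- fmap_comp.
Qed.

Lemma RelLift_BX (B : Functor) W X Y (R : X -> Y -> Prop) b c (w : W) :
  RelLift B (fun A C => @fmap B A C) X Y R b c ->
  RelLift (BX_obj B W) (BX_map B W) X Y R (b, w) (c, w).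
Proof. intros [d [db dc]]. exists (d, w). unfold BX_map. simpl. now rewrite db, dc. Qed.

Lemma sim_coinf (B : OrderedFunctor) (cf : CofreeComonad B) X (f g : X -> B X) :
  (forall x, ord B (f x) (g x)) ->
  forall x, sim_Binf B cf X (coinf cf f x) (coinf cf g x).
Proof.
  intros fg x. exists (fun a b => exists y, a = coinf cf f y /\ b = coinf cf g y).
  split; [|eauto].
  intros a b [y [-> ->]]. rewrite !theta_coinf, !eps_coinf.
  exists (fmap B (coinf cf f) (g y), y), (fmap B (coinf cf g) (g y), y).
  split; [|split].
  - split; [apply fmap_mono, fg | reflexivity].
  - apply RelLift_BX, RelLift_fmap. eauto.
  - split; [apply (ord_preorder B) | reflexivity].
Qed.

Section SupportedModels.

Variables (B : OrderedFunctor) (cf : CofreeComonad B) (S : Functor) (m : FreeMonad S).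
Variable rho : biGSOS S cf m.

Definition model_step (f : Sstar m Empty_set -> B (Sstar m Empty_set))
  (t : Sstar m Empty_set) : B (Sstar m Empty_set) :=
  fmap B (mu m) (rho _ (fmap S (coinf cf f) (unroll m t))).

Lemma supported_model_step_fix f : supported_model rho f <-> model_step f = f.
Proof.
  split.
  - intros f_model. apply functional_extensionality. intros t.
    unfold model_step. rewrite <- (iota_unroll S m t) at 2. now rewrite f_model.
  - intros f_fix s. transitivity (model_step f (iota m s)); [now rewrite f_fix|].
    unfold model_step. now rewrite unroll_iota.
Qed.

Lemma model_step_mono : monotone_spec rho ->
  forall f g, (forall t, ord B (f t) (g t)) ->
  forall t, ord B (model_step f t) (model_step g t).
Proof.
  intros rho_mono f g fg t. apply fmap_mono, rho_mono, RelLift_fmap.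
  now apply sim_coinf.
Qed.

End SupportedModels.

Theorem mainTheorem6 (B : OrderedFunctor) (cf : CofreeComonad B)
  (S : Functor) (m : FreeMonad S)
  (Hdcpo : pointed_dcpo (B (Sstar m Empty_set)) (@ord B (Sstar m Empty_set)))
  (rho : biGSOS S cf m) (Hnat : natural rho) (Hmono : monotone_spec rho) :
  exists f : Sstar m Empty_set -> B (Sstar m Empty_set),
    supported_model rho f /\
    forall g : Sstar m Empty_set -> B (Sstar m Empty_set),
      supported_model rho g ->
      forall t : Sstar m Empty_set, ord B (f t) (g t).
Proof.
  destruct (dcpo_least_prefixpoint _ _ (pointed_dcpo_fun (Sstar m Empty_set) _ _ Hdcpo)
              (model_step B cf S m rho) (model_step_mono B cf S m rho Hmono))
    as [f [f_fix f_least]].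
  exists f. split; [now apply supported_model_step_fix|].
  intros g g_model. apply f_least.
  rewrite (proj1 (supported_model_step_fix B cf S m rho g) g_model).
  intros t. apply (ord_preorder B).
Qed.
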